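(* Let $f:\Omega_D\to\mathbb{O}$ be a slice function of class $C^1$, $\mathbb I=(I,J)\in\mathcal N$, and assume $D$ is bounded with boundary of class $C^1$. Define $Q_I,M_I:\mathbb{O}^3\to\mathbb{O}$ and $N_I:\mathbb{O}^2\to\mathbb{O}$ by $Q_I(x,\xi,a)=(|x|^2+|\xi|^2)^2a-2(|x|^2+|\xi|^2)\big(x(\xi_Ia)+\overline x(\overline{\xi_I}a)\big)+x^2(\xi_I^2a)+\overline x^2(\overline{\xi_I}^2a)+2|x|^2|\xi_I|^2a$, $M_I(x,\xi,a)=Q_I(x,\xi,\overline\xi a)-\overline x\,Q_I(x,\xi,a)$, $N_I(x,\xi)=|\Delta_{\xi_I}(x)|^2+2|\xi_I^\perp|^2\big(|x|^2-2\mathrm{Re}(x)\mathrm{Re}(\xi_I)+|\xi_I|^2\big)+|\xi_I^\perp|^4$. Then the zero set of $N_I$ equals $\Gamma_I$, and $S_{f,\mathbb I}(x,\xi)=\dfrac{M_I(x,\xi,\mathtt n_{\mathbb I}(\xi)f(\xi))}{2\pi^2N_I(x,\xi)^2}$ for all $(x,\xi)\in\partial^*\Omega_{\mathbb I}$, and $V_{f,\mathbb I}(x,\xi)=\dfrac{M_I(x,\xi,\overline{\mathcal D}_{\mathbb I}f(\xi))}{2\pi^2N_I(x,\xi)^2}$ for all $(x,\xi)\in\Omega^*_{\mathbb I}$.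
   Context: Octonions $\mathbb{O}=\mathbb{H}+\ell\mathbb{H}$ (product $(a+\ell b)(c+\ell d)=(ac-d\bar b)+\ell(\bar a d+cb)$, conjugation $\overline{a+\ell b}=\bar a-\ell b$), identified with $\mathbb{R}^8$; $\mathrm{Re},\mathrm{Im}$ real and imaginary parts; $\mathbb S=\{I:I^2=-1\}$; $\mathbb C_I=\mathrm{Span}(1,I)$; $\mathcal N=\{(I,J)\in\mathbb S^2:I\perp J\}$; $\mathbb H_{\mathbb I}=\mathrm{Span}(1,I,J,IJ)$. $D\subset\mathbb{R}^2$ non-empty open, invariant under $(\alpha,\beta)\mapsto(\alpha,-\beta)$, $\Omega_D=\{\alpha+\beta K:(\alpha,\beta)\in D,K\in\mathbb S\}$, assumed connected; $E=\{(x_0,\dots,x_3):(x_0,(x_1^2+x_2^2+x_3^2)^{1/2})\in D\}$. Slice functions: $f(\alpha+\beta K)=F_1(\alpha,\beta)+KF_2(\alpha,\beta)$ with stem $(F_1,F_2)$, $F_1$ even and $F_2$ odd in $\beta$ (also on other circular domains such as $\mathbb{O}\setminus\mathbb S_{I,\xi}$). Slice product: stems multiply by $(F_1,F_2)(G_1,G_2)=(F_1G_1-F_2G_2,F_1G_2+F_2G_1)$; $f^c$ induced by $(\overline{F_1},\overline{F_2})$; $N(f)=f\cdot f^c$ (its stem is real-valued... i.e. it is slice preserving, and $x\mapsto N(f)(x)^{-2}$ is again slice). $\Delta_\eta(x)=x^2-2x\mathrm{Re}\,\eta+|\eta|^2$, $\mathbb S_\eta=\{\mathrm{Re}\,\eta+K|\mathrm{Im}\,\eta|:K\in\mathbb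 S\}$. For $\xi\in\mathbb{O}$: $\xi_I$ orthogonal projection onto $\mathbb C_I$, $\xi_I^\perp=\xi-\xi_I$, $g_{I,\xi}(x)=|x|^2-x\overline{\xi_I}-\overline x\xi_I+|\xi|^2$ (slice function), $\mathbb S_{I,\xi}=\mathbb S_\xi$ if $\xi\in\mathbb C_I$ and $\emptyset$ otherwise; $N(g_{I,\xi})$ vanishes exactly on $\mathbb S_{I,\xi}$. $\Gamma_I=\{(x,\xi)\in\mathbb{O}^2:\xi\in\mathbb C_I,x\in\mathbb S_\xi\}$. $\Omega_{\mathbb I}=\Omega_D\cap\mathbb H_{\mathbb I}$ (bounded with $C^1$ boundary $\partial\Omega_{\mathbb I}$ in $\mathbb H_{\mathbb I}$), $\mathtt n_{\mathbb I}$ its outer unit normal in $\mathbb H_{\mathbb I}$. $\partial^*\Omega_{\mathbb I}=(\mathbb{O}^2\setminus\Gamma_I)\cap(\mathbb{O}\times\partial\Omega_{\mathbb I})$, $\Omega^*_{\mathbb I}=(\mathbb{O}^2\setminus\Gamma_I)\cap(\mathbb{O}\times\Omega_{\mathbb I})$. With $f_{\mathbb I}(v)=f(x_0+x_1I+x_2J+x_3IJ)$, $\overline{\mathcal D}_{\mathbb I}f(\xi)=\partial_0f_{\mathbb I}+I\partial_1f_{\mathbb I}+J\partial_2f_{\mathbb I}+(IJ)\partial_3f_{\mathbb I}$ evaluated at the coordinates of $\xi$. For fixed $\xi$ and a constant $a\in\mathbb{O}$ let $h_{\xi,a}$ be the slice function $x\mapsto(\overline\xi-\overline x)a$; then $S_{f,\mathbb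 I}(x,\xi)$ (for $\xi\in\partial\Omega_{\mathbb I}$, $x\notin\mathbb S_{I,\xi}$) is the value at $x$ of the slice function $\frac1{2\pi^2}N(g_{I,\xi})^{-2}\cdot\big((g^c_{I,\xi}\cdot g^c_{I,\xi})\cdot h_{\xi,a}\big)$ with $a=\mathtt n_{\mathbb I}(\xi)f(\xi)$, and $V_{f,\mathbb I}(x,\xi)$ (for $\xi\in\Omega_{\mathbb I}$) is the same with $a=\overline{\mathcal D}_{\mathbb I}f(\xi)$. *)

From Stdlib Require Import Reals Lra.
From Coquelicot Require Import Coquelicot.
Open Scope R_scope.

(** * Quaternions H = R^4 (basis 1,i,j,k) *)
Record quat := Qt { q0 : R; q1 : R; q2 : R; q3 : R }.

Definition qadd (a b : quat) : quat :=
  Qt (q0 a + q0 b) (q1 a + q1 b) (q2 a + q2 b) (q3 a + q3 b).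
Definition qopp (a : quat) : quat := Qt (- q0 a) (- q1 a) (- q2 a) (- q3 a).
Definition qsub (a b : quat) : quat := qadd a (qopp b).
Definition qmul (a b : quat) : quat :=
  Qt (q0 a * q0 b - q1 a * q1 b - q2 a * q2 b - q3 a * q3 b)
     (q0 a * q1 b + q1 a * q0 b + q2 a * q3 b - q3 a * q2 b)
     (q0 a * q2 b - q1 a * q3 b + q2 a * q0 b + q3 a * q1 b)
     (q0 a * q3 b + q1 a * q2 b - q2 a * q1 b + q3 a * q0 b).
Definition qconj (a : quat) : quat := Qt (q0 a) (- q1 a) (- q2 a) (- q3 a).
Definition qzero : quat := Qt 0 0 0 0.

(** * Octonions O = H + l H, the pair (a,b) standing for a + l b *)
Record oct := Oc { ol : quat; or : quat }.

Definition oadd (x y : oct) : oct := Oc (qadd (ol x) (ol y)) (qadd (or x) (or y)).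
Definition oopp (x : oct) : oct := Oc (qopp (ol x)) (qopp (or x)).
Definition osub (x y : oct) : oct := oadd x (oopp y).
(* (a + l b)(c + l d) = (ac - d conj(b)) + l (conj(a) d + c b) *)
Definition omul (x y : oct) : oct :=
  Oc (qsub (qmul (ol x) (ol y)) (qmul (or y) (qconj (or x))))
     (qadd (qmul (qconj (ol x)) (or y)) (qmul (ol y) (or x))).
Definition oconj (x : oct) : oct := Oc (qconj (ol x)) (qopp (or x)).

Definition mk8 (c : nat -> R) : oct :=
  Oc (Qt (c 0%nat) (c 1%nat) (c 2%nat) (c 3%nat))
     (Qt (c 4%nat) (c 5%nat) (c 6%nat) (c 7%nat)).
Definition ocoord (k : nat) (x : oct) : R :=
  match k with
  | 0%nat => q0 (ol x) | 1%nat => q1 (ol x) | 2%nat => q2 (ol x) | 3%nat => q3 (ol x)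
  | 4%nat => q0 (or x) | 5%nat => q1 (or x) | 6%nat => q2 (or x) | 7%nat => q3 (or x)
  | _ => 0 end.
Definition obasis (k : nat) : oct := mk8 (fun i => if Nat.eqb i k then 1 else 0).

Definition oR (r : R) : oct := Oc (Qt r 0 0 0) qzero.
Definition oscal (r : R) (x : oct) : oct :=
  Oc (Qt (r * q0 (ol x)) (r * q1 (ol x)) (r * q2 (ol x)) (r * q3 (ol x)))
     (Qt (r * q0 (or x)) (r * q1 (or x)) (r * q2 (or x)) (r * q3 (or x))).
Definition ozero : oct := oR 0.
Definition oone : oct := oR 1.

Definition odot (x y : oct) : R :=
  q0 (ol x) * q0 (ol y) + q1 (ol x) * q1 (ol y) + q2 (ol x) * q2 (ol y) + q3 (ol x) * q3 (ol y)
  + q0 (or x) * q0 (or y) + q1 (or x) * q1 (or y) + q2 (or x) * q2 (or y) + q3 (or x) * q3 (or y).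
Definition onorm2 (x : oct) : R := odot x x.
Definition onorm (x : oct) : R := sqrt (onorm2 x).

Definition oRe (x : oct) : R := q0 (ol x).
Definition oIm (x : oct) : oct := osub x (oR (oRe x)).

Definition osph (K : oct) : Prop := omul K K = oR (-1).
Definition Npairs (I J : oct) : Prop := osph I /\ osph J /\ odot I J = 0.

Definition inCI (I x : oct) : Prop := exists a b : R, x = oadd (oR a) (oscal b I).
Definition inHI (I J x : oct) : Prop :=
  exists a b c d : R,
    x = oadd (oadd (oR a) (oscal b I)) (oadd (oscal c J) (oscal d (omul I J))).

(* orthogonal projection onto C_I (1 and I are orthonormal for I in S) *)
Definition projI (I xi : oct) : oct := oadd (oR (odot xi oone)) (oscal (odot xi I) I).
Definition projIperp (I xi : oct) : oct := osub xi (projI I xi).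

Definition Delta (eta x : oct) : oct :=
  oadd (osub (omul x x) (oscal (2 * oRe eta) x)) (oR (onorm2 eta)).
Definition Ssph (eta x : oct) : Prop :=
  exists K, osph K /\ x = oadd (oR (oRe eta)) (oscal (onorm (oIm eta)) K).
Definition GammaI (I x xi : oct) : Prop := inCI I xi /\ Ssph xi x.

Definition QI (I x xi a : oct) : oct :=
  let s := onorm2 x + onorm2 xi in
  let xiI := projI I xi in
  oadd (osub (oscal (s ^ 2) a)
             (oscal (2 * s) (oadd (omul x (omul xiI a))
                                  (omul (oconj x) (omul (oconj xiI) a)))))
       (oadd (oadd (omul (omul x x) (omul (omul xiI xiI) a))
                   (omul (omul (oconj x) (oconj x))
                         (omul (omul (oconj xiI) (oconj xiI)) a)))
             (oscal (2 * onorm2 x * onorm2 xiI) a)).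

Definition MI (I x xi a : oct) : oct :=
  osub (QI I x xi (omul (oconj xi) a)) (omul (oconj x) (QI I x xi a)).

Definition NI (I x xi : oct) : R :=
  let xiI := projI I xi in
  let p := onorm2 (projIperp I xi) in
  onorm2 (Delta xiI x)
  + 2 * p * (onorm2 x - 2 * oRe x * oRe xiI + onorm2 xiI)
  + p ^ 2.

(** * Slice functions, stems, slice product *)
Definition stem := R -> R -> oct * oct.

(* the slice function induced by a stem:
   alpha + beta K |-> F1(alpha,beta) + K F2(alpha,beta), with beta = |Im x|,
   K = Im x / |Im x| (when Im x = 0, F2(alpha,0) = 0 for odd stems) *)
Definition induced (F : stem) (x : oct) : oct :=
  let al := oRe x in
  let be := onorm (oIm x) in
  let K := oscal (/ be) (oIm x) in
  oadd (fst (F al be)) (omul K (snd (F al be))).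

(* fixed imaginary unit used to recover the stem of a slice function *)
Definition e1 : oct := Oc (Qt 0 1 0 0) qzero.

Definition stem_of (f : oct -> oct) : stem := fun al be =>
  let p := f (oadd (oR al) (oscal be e1)) in
  let m := f (osub (oR al) (oscal be e1)) in
  (oscal (/2) (oadd p m), oscal (- / 2) (omul e1 (osub p m))).

Definition stem_mul (F G : stem) : stem := fun al be =>
  let '(F1, F2) := F al be in
  let '(G1, G2) := G al be in
  (osub (omul F1 G1) (omul F2 G2), oadd (omul F1 G2) (omul F2 G1)).
Definition stem_conj (F : stem) : stem := fun al be =>
  let '(F1, F2) := F al be in (oconj F1, oconj F2).

Definition slice_mul (f g : oct -> oct) : oct -> oct :=
  induced (stem_mul (stem_of f) (stem_of g)).
Definition slice_conj (f : oct -> oct) : oct -> oct :=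
  induced (stem_conj (stem_of f)).
Definition sliceN (f : oct -> oct) : oct -> oct := slice_mul f (slice_conj f).

Definition oinv (x : oct) : oct := oscal (/ onorm2 x) (oconj x).
Definition oinvsq (x : oct) : oct := omul (oinv x) (oinv x).

Definition gIxi (I xi : oct) (x : oct) : oct :=
  oadd (osub (osub (oR (onorm2 x)) (omul x (oconj (projI I xi))))
             (omul (oconj x) (projI I xi)))
       (oR (onorm2 xi)).
Definition hxia (xi a : oct) (x : oct) : oct := omul (osub (oconj xi) (oconj x)) a.

Definition kernel (I xi a : oct) (x : oct) : oct :=
  let g := gIxi I xi in
  oscal (/ (2 * PI ^ 2))
    (slice_mul (fun y => oinvsq (sliceN g y))
               (slice_mul (slice_mul (slice_conj g) (slice_conj g)) (hxia xi a)) x).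

Definition Rball2 (p q : R * R) (r : R) : Prop :=
  (fst q - fst p) ^ 2 + (snd q - snd p) ^ 2 < r ^ 2.
Definition OmegaD (D : R -> R -> Prop) (x : oct) : Prop :=
  exists al be K, D al be /\ osph K /\ x = oadd (oR al) (oscal be K).

Definition open_R2 (D : R -> R -> Prop) : Prop :=
  forall a b, D a b -> exists r, 0 < r /\
    forall c d, Rball2 (a, b) (c, d) r -> D c d.
Definition open_O (U : oct -> Prop) : Prop :=
  forall x, U x -> exists r, 0 < r /\ forall y, onorm (osub y x) < r -> U y.
Definition connected_O (A : oct -> Prop) : Prop :=
  forall U V, open_O U -> open_O V -> (forall x, A x -> U x \/ V x) ->
    (forall x, ~ (A x /\ U x /\ V x)) ->
    (forall x, ~ (A x /\ U x)) \/ (forall x, ~ (A x /\ V x)).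
Definition bounded_R2 (D : R -> R -> Prop) : Prop :=
  exists M, forall a b, D a b -> a ^ 2 + b ^ 2 <= M.

Definition boundary_R2 (D : R -> R -> Prop) (a b : R) : Prop :=
  ~ D a b /\ forall e, 0 < e -> exists c d, D c d /\ Rball2 (a, b) (c, d) e.

(* D has C^1 boundary: local C^1 defining functions with non-vanishing gradient *)
Definition C1_boundary_R2 (D : R -> R -> Prop) : Prop :=
  forall a b, boundary_R2 D a b -> exists r (rho : R -> R -> R), 0 < r /\
    (forall c d, Rball2 (a, b) (c, d) r ->
       ex_derive (fun t => rho t d) c /\ ex_derive (fun t => rho c t) d) /\
    (forall c d, Rball2 (a, b) (c, d) r -> forall e, 0 < e -> exists dl, 0 < dl /\
       forall c' d', Rball2 (a, b) (c', d') r -> Rball2 (c, d) (c', d') dl ->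
         Rabs (Derive (fun t => rho t d') c' - Derive (fun t => rho t d) c) < e /\
         Rabs (Derive (fun t => rho c' t) d' - Derive (fun t => rho c t) d) < e) /\
    (Derive (fun t => rho t b) a <> 0 \/ Derive (fun t => rho a t) b <> 0) /\
    (forall c d, Rball2 (a, b) (c, d) r -> (D c d <-> rho c d < 0)).

Definition slice_on (D : R -> R -> Prop) (f : oct -> oct) : Prop :=
  exists F1 F2 : R -> R -> oct,
    (forall a b, D a b -> F1 a (- b) = F1 a b /\ F2 a (- b) = oopp (F2 a b)) /\
    (forall a b K, D a b -> osph K ->
       f (oadd (oR a) (oscal b K)) = oadd (F1 a b) (omul K (F2 a b))).

Definition oderiv (f : oct -> oct) (x u : oct) : oct :=
  mk8 (fun k => Derive (fun t => ocoord k (f (oadd x (oscal t u)))) 0).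
Definition oderivable (f : oct -> oct) (x u : oct) : Prop :=
  forall k, (k < 8)%nat -> ex_derive (fun t => ocoord k (f (oadd x (oscal t u)))) 0.

Definition C1_on (U : oct -> Prop) (f : oct -> oct) : Prop :=
  forall k, (k < 8)%nat ->
    (forall x, U x -> oderivable f x (obasis k)) /\
    (forall x, U x -> forall e, 0 < e -> exists d, 0 < d /\
       forall y, U y -> onorm (osub y x) < d ->
         onorm (osub (oderiv f y (obasis k)) (oderiv f x (obasis k))) < e).

Definition OmegaI (D : R -> R -> Prop) (I J x : oct) : Prop := OmegaD D x /\ inHI I J x.
Definition boundaryI (D : R -> R -> Prop) (I J xi : oct) : Prop :=
  inHI I J xi /\ ~ OmegaI D I J xi /\
  forall e, 0 < e -> exists y, OmegaI D I J y /\ onorm (osub y xi) < e.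

Definition ebasI (I J : oct) (k : nat) : oct :=
  match k with 0%nat => oone | 1%nat => I | 2%nat => J | _ => omul I J end.

Definition rderiv (rho : oct -> R) (y u : oct) : R := Derive (fun t => rho (oadd y (oscal t u))) 0.
Definition gradI (I J : oct) (rho : oct -> R) (y : oct) : oct :=
  oadd (oadd (oscal (rderiv rho y (ebasI I J 0)) (ebasI I J 0))
             (oscal (rderiv rho y (ebasI I J 1)) (ebasI I J 1)))
       (oadd (oscal (rderiv rho y (ebasI I J 2)) (ebasI I J 2))
             (oscal (rderiv rho y (ebasI I J 3)) (ebasI I J 3))).

(* n is the outer unit normal of Omega_I (in H_I): at each boundary point there
   is a local C^1 defining function rho (Omega_I = {rho < 0} near xi, with
   nonzero gradient) and n(xi) = grad rho(xi) / |grad rho(xi)| *)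
Definition outer_unit_normal (D : R -> R -> Prop) (I J : oct) (n : oct -> oct) : Prop :=
  forall xi, boundaryI D I J xi -> exists r (rho : oct -> R), 0 < r /\
    (forall y, inHI I J y -> onorm (osub y xi) < r -> forall k, (k < 4)%nat ->
       ex_derive (fun t => rho (oadd y (oscal t (ebasI I J k)))) 0) /\
    (forall y, inHI I J y -> onorm (osub y xi) < r -> forall e, 0 < e ->
       exists d, 0 < d /\ forall y', inHI I J y' -> onorm (osub y' xi) < r ->
         onorm (osub y' y) < d -> onorm (osub (gradI I J rho y') (gradI I J rho y)) < e) /\
    gradI I J rho xi <> ozero /\
    (forall y, inHI I J y -> onorm (osub y xi) < r -> (OmegaI D I J y <-> rho y < 0)) /\
    n xi = oscal (/ onorm (gradI I J rho xi)) (gradI I J rho xi).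

Definition DbarI (I J : oct) (f : oct -> oct) (xi : oct) : oct :=
  oadd (oadd (oderiv f xi oone) (omul I (oderiv f xi I)))
       (oadd (omul J (oderiv f xi J)) (omul (omul I J) (oderiv f xi (omul I J)))).

Definition SfI (I : oct) (n f : oct -> oct) (x xi : oct) : oct :=
  kernel I xi (omul (n xi) (f xi)) x.
Definition VfI (I J : oct) (f : oct -> oct) (x xi : oct) : oct :=
  kernel I xi (DbarI I J f xi) x.

(* Every function in sight has the form
     y |-> P (a, t) + Im y * Q (a, t),   a = Re y,  t = |Im y|^2,
   and on such functions the slice product and conjugation act on (P, Q) as in C, with
   (Im y)^2 = -|Im y|^2.  For g = g_{I,xi} one finds P = c := a^2 + t - 2 a Re xi + |xi|^2
   (real) and Q = 2 <xi,I> I.  Hence N(g) is the real function c^2 - 4 <xi,I>^2 t, which is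
   N_I; g^c . g^c has P = c^2 + 4 <xi,I>^2 t and Q = -4 c <xi,I> I, which is Q_I; and the
   product with h gives M_I by alternativity.  Finally, with d := (a - Re xi)^2 + |xi_I^perp|^2
   >= 0, N_I = d^2 + 2 d (t + <xi,I>^2) + (t - <xi,I>^2)^2 vanishes exactly on Gamma_I. *)

From Pilot Require Import Defs.
From Stdlib Require Import Reals Lra Psatz.
From Coquelicot Require Import Coquelicot.
Open Scope R_scope.

Lemma oct_ext (x y : oct) :
  q0 (ol x) = q0 (ol y) -> q1 (ol x) = q1 (ol y) -> q2 (ol x) = q2 (ol y) -> q3 (ol x) = q3 (ol y) ->
  q0 (or x) = q0 (or y) -> q1 (or x) = q1 (or y) -> q2 (or x) = q2 (or y) -> q3 (or x) = q3 (or y) ->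
  x = y.
Proof. destruct x as [[] []], y as [[] []]; simpl; intros; subst; reflexivity. Qed.

Ltac unfold_oct := cbv beta iota delta [oIm oRe osub qsub oadd oopp oscal oR omul oconj
  qadd qopp qmul qconj qzero e1 oone ozero onorm2 odot q0 q1 q2 q3 ol or fst snd] in *.
Ltac oct_ring := intros; apply oct_ext; unfold_oct; ring.

Lemma omul_addl x y z : omul (oadd x y) z = oadd (omul x z) (omul y z). Proof. oct_ring. Qed.
Lemma omul_addr x y z : omul z (oadd x y) = oadd (omul z x) (omul z y). Proof. oct_ring. Qed.
Lemma omul_subl x y z : omul (osub x y) z = osub (omul x z) (omul y z). Proof. oct_ring. Qed.
Lemma omul_subr x y z : omul z (osub x y) = osub (omul z x) (omul z y). Proof. oct_ring. Qed.
Lemma omul_oppl x z : omul (oopp x) z = oopp (omul x z). Proof. oct_ring. Qed.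
Lemma omul_oppr x z : omul z (oopp x) = oopp (omul z x). Proof. oct_ring. Qed.
Lemma omul_scall r x y : omul (oscal r x) y = oscal r (omul x y). Proof. oct_ring. Qed.
Lemma omul_scalr r x y : omul x (oscal r y) = oscal r (omul x y). Proof. oct_ring. Qed.
Lemma omul_oRl r y : omul (oR r) y = oscal r y. Proof. oct_ring. Qed.
Lemma omul_oRr r y : omul y (oR r) = oscal r y. Proof. oct_ring. Qed.
Lemma omul_0l y : omul ozero y = ozero. Proof. oct_ring. Qed.
Lemma omul_0r y : omul y ozero = ozero. Proof. oct_ring. Qed.
Lemma oconj_add x y : oconj (oadd x y) = oadd (oconj x) (oconj y). Proof. oct_ring. Qed.
Lemma oconj_sub x y : oconj (osub x y) = osub (oconj x) (oconj y). Proof. oct_ring. Qed.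
Lemma oconj_opp x : oconj (oopp x) = oopp (oconj x). Proof. oct_ring. Qed.
Lemma oconj_scal r x : oconj (oscal r x) = oscal r (oconj x). Proof. oct_ring. Qed.
Lemma oconj_oR r : oconj (oR r) = oR r. Proof. oct_ring. Qed.
Lemma omul_alternative_l x y : omul x (omul x y) = omul (omul x x) y. Proof. oct_ring. Qed.
Lemma oscal_oscal r s x : oscal r (oscal s x) = oscal (r * s) x. Proof. oct_ring. Qed.
Lemma oscal_1 x : oscal 1 x = x. Proof. oct_ring. Qed.
Lemma oscal_0 r : oscal r ozero = ozero. Proof. oct_ring. Qed.
Lemma oadd_0 x : oadd x ozero = x. Proof. oct_ring. Qed.

Ltac oct_distr := repeat progress rewrite ?omul_addl, ?omul_addr, ?omul_subl, ?omul_subr,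
  ?omul_oppl, ?omul_oppr, ?omul_scall, ?omul_scalr, ?omul_oRl, ?omul_oRr, ?omul_0l, ?omul_0r,
  ?oconj_add, ?oconj_sub, ?oconj_opp, ?oconj_scal, ?oconj_oR.

(* Once products are fully distributed, the remaining ones can be treated as opaque
   vectors: the goal is then linear over R and [oct_ring] stays small. *)
Ltac abstract_products := repeat match goal with |- context [omul ?p ?q] =>
  let z := fresh "z" in set (z := omul p q) in *; clearbody z end.

Lemma oRe_oIm x : oRe (oIm x) = 0. Proof. unfold_oct; ring. Qed.
Lemma oRe_oIm_decomp x : x = oadd (oR (oRe x)) (oIm x). Proof. oct_ring. Qed.
Lemma oconj_decomp x : oconj x = osub (oR (oRe x)) (oIm x). Proof. oct_ring. Qed.
Lemma onorm2_decomp x : onorm2 x = oRe x * oRe x + onorm2 (oIm x). Proof. unfold_oct; ring. Qed.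
Lemma odot_oone x : odot x oone = oRe x. Proof. unfold_oct; ring. Qed.

Lemma onorm2_ge0 x : 0 <= onorm2 x. Proof. unfold_oct; nra. Qed.
Lemma onorm2_eq0 x : onorm2 x = 0 -> x = ozero.
Proof. destruct x as [[a b c d] [e f g h]]; unfold_oct; intro H; apply oct_ext; unfold_oct; nra. Qed.

Lemma omul_self_imag X : oRe X = 0 -> omul X X = oR (- onorm2 X).
Proof. destruct X as [[a b c d] [e f g h]]; unfold_oct; intro; subst; oct_ring. Qed.
Lemma oconj_imag X : oRe X = 0 -> oconj X = oopp X.
Proof. destruct X as [[a b c d] [e f g h]]; unfold_oct; intro; subst; oct_ring. Qed.

Lemma omul_self x :
  omul x x = oadd (oR (oRe x * oRe x - onorm2 (oIm x))) (oscal (2 * oRe x) (oIm x)).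
Proof. oct_ring. Qed.

Lemma osphP K : osph K <-> oRe K = 0 /\ onorm2 K = 1.
Proof.
  split.
  - unfold osph; rewrite omul_self; intro HK.
    pose proof (f_equal oRe HK) as Hre.
    pose proof (f_equal (fun z => onorm2 (oIm z)) HK) as Him.
    destruct K as [[a b c d] [e f g h]]; unfold_oct.
    assert (a = 0) by nra. subst; split; [reflexivity | nra].
  - intros [H0 H1]; unfold osph; rewrite omul_self_imag, H1 by exact H0; reflexivity.
Qed.

Definition slice_form (f : oct -> oct) (P Q : R -> R -> oct) : Prop :=
  forall y, f y = oadd (P (oRe y) (onorm2 (oIm y))) (omul (oIm y) (Q (oRe y) (onorm2 (oIm y)))).

Lemma stem_of_slice_form f P Q : slice_form f P Q ->
  forall al be, stem_of f al be = (P al (be * be), oscal be (Q al (be * be))).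
Proof.
  intros Hf al be; unfold stem_of; rewrite !Hf.
  replace (oRe (oadd (oR al) (oscal be e1))) with al by (unfold_oct; ring).
  replace (oRe (osub (oR al) (oscal be e1))) with al by (unfold_oct; ring).
  replace (oIm (oadd (oR al) (oscal be e1))) with (oscal be e1) by oct_ring.
  replace (oIm (osub (oR al) (oscal be e1))) with (oscal (- be) e1) by oct_ring.
  replace (onorm2 (oscal be e1)) with (be * be) by (unfold_oct; ring).
  replace (onorm2 (oscal (- be) e1)) with (be * be) by (unfold_oct; ring).
  f_equal; apply oct_ext; unfold_oct; field.
Qed.

Lemma induced_slice_form F P Q :
  (forall al be, 0 <= be -> F al be = (P al (be * be), oscal be (Q al (be * be)))) ->
  slice_form (induced F) P Q.
Proof.
  intros HF y; unfold induced; rewrite HF by apply sqrt_pos; cbn [fst snd].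
  unfold onorm; rewrite sqrt_sqrt by apply onorm2_ge0; f_equal.
  rewrite omul_scall, omul_scalr, oscal_oscal.
  destruct (Req_dec (sqrt (onorm2 (oIm y))) 0) as [Hy | Hy].
  - apply sqrt_eq_0, onorm2_eq0 in Hy; [| apply onorm2_ge0].
    rewrite Hy, omul_0l, oscal_0; reflexivity.
  - rewrite Rinv_l by exact Hy; apply oscal_1.
Qed.

Lemma slice_mul_form f g P1 Q1 P2 Q2 : slice_form f P1 Q1 -> slice_form g P2 Q2 ->
  slice_form (slice_mul f g)
    (fun a t => osub (omul (P1 a t) (P2 a t)) (oscal t (omul (Q1 a t) (Q2 a t))))
    (fun a t => oadd (omul (P1 a t) (Q2 a t)) (omul (Q1 a t) (P2 a t))).
Proof.
  intros Hf Hg; apply induced_slice_form; intros al be _.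
  unfold stem_mul; rewrite (stem_of_slice_form f _ _ Hf), (stem_of_slice_form g _ _ Hg).
  f_equal; oct_ring.
Qed.

Lemma slice_conj_form f P Q : slice_form f P Q ->
  slice_form (slice_conj f) (fun a t => oconj (P a t)) (fun a t => oconj (Q a t)).
Proof.
  intros Hf; apply induced_slice_form; intros al be _.
  unfold stem_conj; rewrite (stem_of_slice_form f _ _ Hf).
  f_equal; oct_ring.
Qed.

Lemma slice_form_ext f P Q P' Q' : slice_form f P Q ->
  (forall a t, P a t = P' a t) -> (forall a t, Q a t = Q' a t) -> slice_form f P' Q'.
Proof. intros Hf HP HQ y; rewrite Hf, HP, HQ; reflexivity. Qed.

Definition gIxi_stem1 (xi : oct) (al t : R) : R := al * al + t - 2 * al * oRe xi + onorm2 xi.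

Lemma gIxi_form I xi : oRe I = 0 ->
  slice_form (gIxi I xi) (fun al t => oR (gIxi_stem1 xi al t)) (fun _ _ => oscal (2 * odot xi I) I).
Proof.
  intros HI y; unfold gIxi, projI, gIxi_stem1; rewrite odot_oone.
  generalize (oRe xi) (odot xi I) (onorm2 xi); intros u v m.
  destruct I as [[i0 i1 i2 i3] [i4 i5 i6 i7]]; unfold_oct; subst; oct_ring.
Qed.

Lemma hxia_form xi a :
  slice_form (hxia xi a) (fun al _ => omul (osub (oconj xi) (oR al)) a) (fun _ _ => a).
Proof. intro y; unfold hxia; oct_ring. Qed.

Lemma gIxi_conj_sq_form I xi : osph I ->
  slice_form (slice_mul (slice_conj (gIxi I xi)) (slice_conj (gIxi I xi)))
    (fun al t => oR (gIxi_stem1 xi al t * gIxi_stem1 xi al t + 4 * odot xi I * odot xi I * t))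
    (fun al t => oscal (-4 * gIxi_stem1 xi al t * odot xi I) I).
Proof.
  intros HI; pose proof HI as [HI0 HI1]%osphP.
  pose proof (slice_conj_form _ _ _ (gIxi_form I xi HI0)) as Hgc.
  apply (slice_form_ext _ _ _ _ _ (slice_mul_form _ _ _ _ _ _ Hgc Hgc)); intros al t;
    oct_distr; rewrite ?oconj_imag, ?omul_oppl, ?omul_oppr, ?omul_self_imag, ?HI1 by exact HI0;
    oct_ring.
Qed.

Lemma projI_decomp I xi : projI I xi = oadd (oR (oRe xi)) (oscal (odot xi I) I).
Proof. unfold projI; rewrite odot_oone; reflexivity. Qed.

Lemma onorm2_projI I xi : osph I ->
  onorm2 (projI I xi) = oRe xi * oRe xi + odot xi I * odot xi I.
Proof.
  intros [HI0 HI1]%osphP; rewrite projI_decomp.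
  generalize (oRe xi) (odot xi I); intros u v.
  transitivity (u * u + 2 * u * v * oRe I + v * v * onorm2 I); [unfold_oct; ring |].
  rewrite HI0, HI1; ring.
Qed.

Lemma QI_eq I x xi b : osph I ->
  QI I x xi b =
  oadd (oscal (gIxi_stem1 xi (oRe x) (onorm2 (oIm x)) * gIxi_stem1 xi (oRe x) (onorm2 (oIm x))
               + 4 * odot xi I * odot xi I * onorm2 (oIm x)) b)
       (omul (oIm x) (oscal (-4 * gIxi_stem1 xi (oRe x) (onorm2 (oIm x)) * odot xi I) (omul I b))).
Proof.
  intros HI; pose proof HI as [HI0 _]%osphP.
  cbv beta zeta delta [QI].
  rewrite (onorm2_projI I xi HI), (onorm2_decomp x), (oconj_decomp x), projI_decomp.
  unfold gIxi_stem1.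
  pose proof (oRe_oIm_decomp x) as Hx.
  pose proof (omul_self_imag _ (oRe_oIm x)) as HXX.
  pose proof (oconj_imag I HI0) as HcI; unfold osph in HI.
  set (u := oRe xi) in *; set (v := odot xi I) in *; set (m := onorm2 xi) in *.
  set (al := oRe x) in *; set (X := oIm x) in *; set (t := onorm2 X) in *.
  clearbody al X t u v m; subst x.
  oct_distr; rewrite ?HXX, ?HI, ?HcI; oct_distr; rewrite ?HXX, ?HI, ?HcI; oct_distr.
  abstract_products; oct_ring.
Qed.

Lemma gIxi_conj_sq_hxia I xi a x : osph I ->
  slice_mul (slice_mul (slice_conj (gIxi I xi)) (slice_conj (gIxi I xi))) (hxia xi a) x =
  MI I x xi a.
Proof.
  intros HI.
  rewrite (slice_mul_form _ _ _ _ _ _ (gIxi_conj_sq_form I xi HI) (hxia_form xi a)).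
  unfold MI; rewrite !(QI_eq I x xi _ HI), (oconj_decomp x).
  pose proof (omul_self_imag _ (oRe_oIm x)) as HXX.
  set (P := _ + _); set (c := gIxi_stem1 _ _ _).
  set (al := oRe x) in *; set (X := oIm x) in *; set (t := onorm2 X) in *.
  clearbody P c al X t.
  oct_distr; rewrite ?omul_alternative_l, ?HXX; oct_distr.
  abstract_products; oct_ring.
Qed.

Lemma onorm2_Delta e x : onorm2 (Defs.Delta e x) =
  (oRe x * oRe x - onorm2 (oIm x) - 2 * oRe e * oRe x + onorm2 e) ^ 2
  + (2 * oRe x - 2 * oRe e) ^ 2 * onorm2 (oIm x).
Proof. unfold Defs.Delta; generalize (oRe e) (onorm2 e); intros r s; unfold_oct; ring. Qed.

Lemma onorm2_projIperp I xi : osph I ->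
  onorm2 (projIperp I xi) = onorm2 xi - oRe xi * oRe xi - odot xi I * odot xi I.
Proof.
  intros [HI0 HI1]%osphP; unfold projIperp; rewrite projI_decomp.
  transitivity (onorm2 xi - 2 * oRe xi * oRe xi - 2 * odot xi I * odot xi I
    + oRe xi * oRe xi + 2 * oRe xi * odot xi I * oRe I + odot xi I * odot xi I * onorm2 I);
    [unfold_oct; ring |].
  rewrite HI0, HI1; ring.
Qed.

Lemma oRe_projI I xi : osph I -> oRe (projI I xi) = oRe xi.
Proof.
  intros [HI0 _]%osphP; rewrite projI_decomp.
  transitivity (oRe xi + odot xi I * oRe I); [unfold_oct; ring | rewrite HI0; ring].
Qed.

Lemma NI_eq I x xi : osph I ->
  NI I x xi = gIxi_stem1 xi (oRe x) (onorm2 (oIm x)) * gIxi_stem1 xi (oRe x) (onorm2 (oIm x))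
              - 4 * odot xi I * odot xi I * onorm2 (oIm x).
Proof.
  intros HI; cbv beta zeta delta [NI].
  rewrite onorm2_Delta, (oRe_projI I xi HI), (onorm2_projI I xi HI),
    (onorm2_projIperp I xi HI), (onorm2_decomp x).
  unfold gIxi_stem1; ring.
Qed.

Lemma sliceN_gIxi_form I xi : osph I ->
  slice_form (sliceN (gIxi I xi))
    (fun al t => oR (gIxi_stem1 xi al t * gIxi_stem1 xi al t - 4 * odot xi I * odot xi I * t))
    (fun _ _ => ozero).
Proof.
  intros HI; pose proof HI as [HI0 HI1]%osphP.
  pose proof (gIxi_form I xi HI0) as Hg.
  apply (slice_form_ext _ _ _ _ _ (slice_mul_form _ _ _ _ _ _ Hg (slice_conj_form _ _ _ Hg)));
    intros al t; oct_distr; rewrite ?oconj_imag, ?omul_oppl, ?omul_oppr, ?omul_self_imag, ?HI1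
    by exact HI0; oct_ring.
Qed.

Lemma oinvsq_oR r : oinvsq (oR r) = oR (/ (r * r)).
Proof.
  unfold oinvsq, oinv; destruct (Req_dec r 0) as [-> | Hr].
  - rewrite Rmult_0_l, Rinv_0; oct_ring.
  - apply oct_ext; unfold_oct; field; exact Hr.
Qed.

Lemma slice_mul_real_l f p g P Q y :
  slice_form f (fun a t => oR (p a t)) (fun _ _ => ozero) -> slice_form g P Q ->
  slice_mul f g y = oscal (p (oRe y) (onorm2 (oIm y))) (g y).
Proof.
  intros Hf Hg; rewrite (slice_mul_form _ _ _ _ _ _ Hf Hg), Hg.
  oct_distr; oct_ring.
Qed.

Lemma oinvsq_real_form f p :
  slice_form f (fun a t => oR (p a t)) (fun _ _ => ozero) ->
  slice_form (fun y => oinvsq (f y)) (fun a t => oR (/ (p a t * p a t))) (fun _ _ => ozero).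
Proof. intros Hf y; rewrite Hf, !omul_0r, !oadd_0, oinvsq_oR; reflexivity. Qed.

Lemma kernel_eq I xi a x : osph I ->
  kernel I xi a x = oscal (/ (2 * PI ^ 2 * NI I x xi ^ 2)) (MI I x xi a).
Proof.
  intros HI; unfold kernel.
  rewrite (slice_mul_real_l _ _ _ _ _ _ (oinvsq_real_form _ _ (sliceN_gIxi_form I xi HI))
             (slice_mul_form _ _ _ _ _ _ (gIxi_conj_sq_form I xi HI) (hxia_form xi a))).
  rewrite gIxi_conj_sq_hxia, oscal_oscal, (NI_eq I x xi HI) by exact HI.
  f_equal; rewrite <- Rinv_mult; f_equal; ring.
Qed.

Lemma Ssph_iff eta x : Ssph eta x <-> oRe x = oRe eta /\ onorm2 (oIm x) = onorm2 (oIm eta).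
Proof.
  unfold Ssph, onorm; split.
  - intros (K & [HK0 HK1]%osphP & ->).
    split; [unfold_oct; rewrite HK0; ring |].
    transitivity (sqrt (onorm2 (oIm eta)) * sqrt (onorm2 (oIm eta)) * (onorm2 K - oRe K * oRe K));
      [unfold_oct; ring |].
    rewrite HK0, HK1, sqrt_sqrt by apply onorm2_ge0; ring.
  - intros [Hre Him]; rewrite <- Hre, <- Him; set (s := sqrt (onorm2 (oIm x))).
    assert (Hs : s * s = onorm2 (oIm x)) by apply sqrt_sqrt, onorm2_ge0.
    destruct (Req_dec s 0) as [Hs0 | Hs0].
    + exists e1; split; [apply osphP; split; unfold_oct; ring |].
      rewrite Hs0, Rmult_0_l in Hs; apply eq_sym, onorm2_eq0 in Hs.
      rewrite (oRe_oIm_decomp x) at 1; rewrite Hs, Hs0; oct_ring.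
    + exists (oscal (/ s) (oIm x)); split.
      * apply osphP; split.
        -- transitivity (/ s * oRe (oIm x)); [unfold_oct; ring | rewrite oRe_oIm; ring].
        -- transitivity (/ s * / s * onorm2 (oIm x)); [unfold_oct; ring |].
           rewrite <- Hs; field; exact Hs0.
      * rewrite oscal_oscal, Rinv_r, oscal_1 by exact Hs0; apply oRe_oIm_decomp.
Qed.

Lemma inCI_iff I xi : osph I -> inCI I xi <-> onorm2 (projIperp I xi) = 0.
Proof.
  intros HI; pose proof HI as [HI0 HI1]%osphP; split.
  - intros (a & b & ->).
    assert (Hu : odot (oadd (oR a) (oscal b I)) oone = a)
      by (transitivity (a + b * oRe I); [unfold_oct; ring | rewrite HI0; ring]).
    assert (Hv : odot (oadd (oR a) (oscal b I)) I = b)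
      by (transitivity (a * oRe I + b * onorm2 I); [unfold_oct; ring | rewrite HI0, HI1; ring]).
    unfold projIperp, projI; rewrite Hu, Hv; unfold_oct; ring.
  - intros Hp%onorm2_eq0; exists (odot xi oone), (odot xi I).
    unfold projIperp, projI in Hp; revert Hp.
    generalize (oadd (oR (odot xi oone)) (oscal (odot xi I) I)); intros p Hp.
    transitivity (oadd (osub xi p) p); [oct_ring | rewrite Hp; oct_ring].
Qed.

Lemma GammaI_iff I x xi : osph I ->
  GammaI I x xi <->
  onorm2 (projIperp I xi) = 0 /\ oRe x = oRe xi /\ onorm2 (oIm x) = odot xi I * odot xi I.
Proof.
  intros HI; unfold GammaI; rewrite (inCI_iff I xi HI), Ssph_iff.
  pose proof (onorm2_projIperp I xi HI) as Hp; pose proof (onorm2_decomp xi) as Hxi.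
  split; intros (H0 & H1 & H2); repeat split; auto; lra.
Qed.

Lemma NI_zero I x xi : osph I -> (NI I x xi = 0 <-> GammaI I x xi).
Proof.
  intros HI; rewrite (NI_eq I x xi HI), (GammaI_iff I x xi HI).
  pose proof (onorm2_projIperp I xi HI) as Hp.
  pose proof (onorm2_ge0 (projIperp I xi)); pose proof (onorm2_ge0 (oIm x)).
  unfold gIxi_stem1.
  set (p := onorm2 (projIperp I xi)) in *; set (t := onorm2 (oIm x)) in *.
  set (al := oRe x) in *; set (u := oRe xi) in *; set (v := odot xi I) in *.
  replace (onorm2 xi) with (u * u + v * v + p) by lra.
  set (d := (al - u) * (al - u) + p).
  assert (Hd : 0 <= d) by (unfold d; pose proof (Rle_0_sqr (al - u)); unfold Rsqr in *; lra).
  replace ((al * al + t - 2 * al * u + (u * u + v * v + p)) *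
           (al * al + t - 2 * al * u + (u * u + v * v + p)) - 4 * v * v * t)
    with (d * d + 2 * d * (t + v * v) + (t - v * v) * (t - v * v)) by (unfold d; ring).
  split.
  - intros HN.
    assert (Hdt : 0 <= d * (t + v * v)) by (apply Rmult_le_pos; nra).
    pose proof (Rle_0_sqr d); pose proof (Rle_0_sqr (t - v * v)); unfold Rsqr in *.
    assert (Ht : t = v * v) by (apply Rminus_diag_uniq, Rsqr_0_uniq; unfold Rsqr; lra).
    assert (Hd0 : d = 0) by (apply Rsqr_0_uniq; unfold Rsqr; lra).
    pose proof (Rle_0_sqr (al - u)); unfold d, Rsqr in *.
    assert (Hal : al - u = 0) by (apply Rsqr_0_uniq; unfold Rsqr; lra).
    repeat split; lra.
  - intros (Hp0 & Hal & Ht); unfold d; rewrite Hp0, Hal, Ht; fold u; ring.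
Qed.

Theorem lemma2p18 (D : R -> R -> Prop) (f : oct -> oct) (I J : oct) (n : oct -> oct) :
  open_R2 D -> (exists a b, D a b) -> (forall a b, D a b -> D a (- b)) ->
  connected_O (OmegaD D) ->
  bounded_R2 D -> C1_boundary_R2 D ->
  slice_on D f -> C1_on (OmegaD D) f ->
  Npairs I J ->
  outer_unit_normal D I J n ->
  (forall x xi, NI I x xi = 0 <-> GammaI I x xi) /\
  (forall x xi, boundaryI D I J xi -> ~ GammaI I x xi ->
     SfI I n f x xi =
     oscal (/ (2 * PI ^ 2 * NI I x xi ^ 2)) (MI I x xi (omul (n xi) (f xi)))) /\
  (forall x xi, OmegaI D I J xi -> ~ GammaI I x xi ->
     VfI I J f x xi =
     oscal (/ (2 * PI ^ 2 * NI I x xi ^ 2)) (MI I x xi (DbarI I J f xi))).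
Proof.
  intros _ _ _ _ _ _ _ _ [HI _] _.
  split; [intros x xi; exact (NI_zero I x xi HI) |].
  split; intros x xi _ _; apply kernel_eq, HI.
Qed.
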